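(* Let $A\subset\mathcal X$ be nonempty and $x\notin A$. For a path $\omega$: $\omega\in\Omega^{\rm opt}_{x,A}$ if and only if $\omega\in\Omega_{x,A}$ and every state of $\omega$ belongs to $C^+_A(x)$.
   Context: Setting: $\mathcal X$ finite, $H:\mathcal X\to\mathbb R$ non-constant, $q$ a stochastic, symmetric, irreducible matrix on $\mathcal X$. A path is a finite sequence $\omega=(\omega_1,\dots,\omega_n)$ with $q(\omega_i,\omega_{i+1})>0$ ($n=1$ allowed). $\Phi_\omega=\max_iH(\omega_i)$, $\Phi(x,y)=\min$ of $\Phi_\omega$ over paths from $x$ to $y$, $\Phi(B,D)=\min_{x\in B,y\in D}\Phi(x,y)$. $\Omega_{x,A}$ = paths from $x$ ending in $A$ and not visiting $A$ before their last state; $\Omega^{\rm opt}_{x,A}=\{\omega\in\Omega_{x,A}:\Phi_\omega=\Phi(x,A)\}$. Connected set: at least two elements, any two joined by a path inside it. $\partial B=\{y\notin B:\exists x\in B,q(x,y)>0\}$. A cycle is a nonempty $C$ that is a singleton or connected with $\max_CH<\min_{\partial C}H$. Initial cycle $C_A(x)=\{x\}\cup\{z:\Phi(x,z)<\Phi(x,A)\}$. Relevant cycle $C^+_A(x)$: the minimal (for inclusion) cycle $C$ with $C_A(x)\subsetneq C$ (cycles containing $x$ are totally ordered by inclusion). Convention: $A$ contains every $y$ such that every path from $x$ to $y$ meets $A$. *)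

From HB Require Import structures.
From mathcomp Require Import all_boot all_order all_algebra.
From mathcomp Require Import boolp.
Set Implicit Arguments. Unset Strict Implicit. Unset Printing Implicit Defensive.
Import Order.TTheory GRing.Theory Num.Theory.
Local Open Scope ring_scope.

Section Landscape.
Variables (R : realDomainType) (X : finType) (H : X -> R) (q : X -> X -> R).

Definition stochastic : Prop :=
  (forall x y, 0 <= q x y) /\ (forall x, \sum_(y : X) q x y = 1).
Definition symmetric_mx : Prop := forall x y, q x y = q y x.

Definition qrel : rel X := fun a b => 0 < q a b.

Definition is_path (w : seq X) : bool :=
  if w is a :: r then path qrel a r else false.

Definition path_from_to (x y : X) (w : seq X) : Prop :=
  [/\ is_path w, head x w = x & last x w = y].

(* irreducibility: every state leads to every state (q^n(x,y) > 0 for some n) *)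
Definition irreducible_mx : Prop :=
  forall x y, exists w, path_from_to x y w.

Definition Phi_w (w : seq X) : R :=
  if w is a :: r then \big[Num.max/H a]_(z <- r) H z else 0.

Definition Htop : R := \big[Num.max/0]_(z : X) H z.

(* Phi(x,y) = min of Phi_w over paths w from x to y. Since every Phi_w is a
   value H z, this is the minimum over the (finite) set of attained values. *)
Definition Phi (x y : X) : R :=
  \big[Num.min/Htop]_(z : X | `[< exists w, path_from_to x y w /\ Phi_w w = H z >])
     H z.

Definition PhiS (B D : {set X}) : R :=
  \big[Num.min/Htop]_(x in B) \big[Num.min/Htop]_(y in D) Phi x y.

(* Omega_{x,A}: paths from x ending in A, not visiting A before their last state *)
Definition Omega (x : X) (A : {set X}) (w : seq X) : Prop :=
  [/\ is_path w, head x w = x, last x w \in A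
    & all (fun z => z \notin A) (belast x (behead w))].

Definition Omega_opt (x : X) (A : {set X}) (w : seq X) : Prop :=
  Omega x A w /\ Phi_w w = PhiS [set x] A.

Definition connected_set (C : {set X}) : Prop :=
  (1 < #|C|)%N /\
  forall a b, a \in C -> b \in C ->
    exists w, path_from_to a b w /\ all (fun z => z \in C) w.

Definition bd (B : {set X}) : {set X} :=
  [set y | (y \notin B) && [exists z in B, qrel z y]].

Definition is_cycle (C : {set X}) : Prop :=
  C != set0 /\
  ((#|C| = 1)%N \/
   (connected_set C /\ forall a b, a \in C -> b \in bd C -> H a < H b)).

Definition init_cycle (A : {set X}) (x : X) : {set X} :=
  [set z | (z == x) || (Phi x z < PhiS [set x] A)].

Definition is_relevant_cycle (A : {set X}) (x : X) (C : {set X}) : Prop :=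
  [/\ is_cycle C, init_cycle A x \proper C
    & forall C', is_cycle C' -> init_cycle A x \proper C' -> C \subset C'].

Definition A_convention (x : X) (A : {set X}) : Prop :=
  forall y, (forall w, path_from_to x y w -> has (fun z => z \in A) w) -> y \in A.

End Landscape.

From HB Require Import structures.
From mathcomp Require Import all_boot all_order all_algebra.
From mathcomp Require Import boolp.
Import Order.TTheory GRing.Theory Num.Theory.
Local Open Scope ring_scope.

Set Implicit Arguments.
Unset Strict Implicit.

(* The relevant cycle C^+_A(x) is the set D of states z with
   Phi(x,z) <= Phi(x,A).  Indeed D is a cycle: it is connected through x
   (paths can be reversed since q is symmetric), and a neighbour b of D with
   H(b) <= Phi(x,A) would itself lie in D.  D strictly contains C_A(x), as it
   contains a point of A realising Phi(x,A).  Conversely, a non-singleton cycle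
   C strictly containing C_A(x) contains some u with Phi(x,u) >= Phi(x,A); if a
   point of D were outside C, an optimal path to it would leave C through a
   boundary state b with H(b) <= Phi(x,A), and every path from x to u inside C
   would then stay strictly below Phi(x,A).  Once C^+_A(x) = D, a path in
   Omega_{x,A} has height Phi(x,A) exactly when all its states lie in D. *)

Section Paths.
Variables (R : realDomainType) (X : finType) (q : X -> X -> R).

Lemma path_from_to_cons x y a r :
  path_from_to q x y (a :: r) <-> [/\ a = x, path (qrel q) x r & last x r = y].
Proof. by split=> [[/= p ax l] | [-> p l]]; [subst a | split]. Qed.

Lemma path_from_to_rcons x y z w :
  path_from_to q x y w -> qrel q y z -> path_from_to q x z (rcons w z).
Proof.
case: w => [[]//|a r] /path_from_to_cons[-> p l] yz.
by apply/path_from_to_cons; rewrite rcons_path p l yz last_rcons.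
Qed.

Lemma path_from_to_cat x y z w1 w2 :
  path_from_to q x y w1 -> path_from_to q y z w2 ->
  path_from_to q x z (w1 ++ behead w2).
Proof.
case: w1 => [[]//|a1 r1] /path_from_to_cons[-> p1 l1].
case: w2 => [[]//|a2 r2] /path_from_to_cons[-> p2 l2].
by apply/path_from_to_cons; rewrite cat_path last_cat p1 l1 p2 l2.
Qed.

Lemma path_from_to_prefix x y w z :
  path_from_to q x y w -> z \in w ->
  exists2 w', path_from_to q x z w' & {subset w' <= w}.
Proof.
case: w => [[]//|a r] /path_from_to_cons[-> p _].
rewrite inE => /predU1P[-> | zr].
  by exists [:: x] => // u; rewrite mem_seq1 => /eqP->; rewrite mem_head.
case/path.splitP: zr p => r1 r2; rewrite cat_path => /andP[p1 _].
exists (x :: rcons r1 z); first by apply/path_from_to_cons; rewrite last_rcons.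
by move=> u; rewrite -cat_cons mem_cat => ->.
Qed.

Lemma path_exit (C : {set X}) c r :
  path (qrel q) c r -> c \in C -> last c r \notin C ->
  exists2 b, b \in bd q C & b \in r.
Proof.
elim: r c => [|d r IH] c /=; first by move=> _ ->.
case/andP=> cd pr cC lC; have [dC | dNC] := boolP (d \in C).
  by have [b bC br] := IH d pr dC lC; exists b; rewrite // inE br orbT.
by exists d; rewrite ?mem_head // inE dNC; apply/existsP; exists c; rewrite cC.
Qed.

Hypothesis q_sym : symmetric_mx q.

Lemma path_from_to_rev x y w :
  path_from_to q x y w -> path_from_to q y x (rev w).
Proof.
case: w => [[]//|a r] /path_from_to_cons[-> p l].
rewrite lastI rev_rcons; apply/path_from_to_cons; split => //.
  by rewrite -l rev_path (eq_path (e' := qrel q)) // => u v; rewrite /qrel q_sym.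
by case: r {p} l => [|b r] /= <- //; rewrite rev_cons last_rcons.
Qed.

End Paths.

Section PathHeights.
Variables (R : realDomainType) (X : finType) (H : X -> R).

Lemma Phi_w_le a r c :
  (Phi_w H (a :: r) <= c) = all (fun z => H z <= c) (a :: r).
Proof.
rewrite /=; elim: r => [|b r IH]; first by rewrite big_nil andbT.
by rewrite big_cons ge_max IH /= andbCA.
Qed.

Lemma Phi_w_mem a r : exists2 z, z \in a :: r & Phi_w H (a :: r) = H z.
Proof.
rewrite /=; elim: r => [|b r [z zr IH]]; first by exists a; rewrite ?big_nil ?inE.
rewrite big_cons IH /Order.max; case: ifP => _; last by exists b; rewrite // !inE eqxx orbT.
by exists z; rewrite // !inE in zr *; case/orP: zr => ->; rewrite ?orbT.
Qed.

Lemma le_Phi_w w z : z \in w -> H z <= Phi_w H w.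
Proof.
case: w => // a r zw.
by have := lexx (Phi_w H (a :: r)); rewrite Phi_w_le => /allP; apply.
Qed.

Lemma Phi_w_lt a r c : all (fun z => H z < c) (a :: r) -> Phi_w H (a :: r) < c.
Proof. by have [z zw ->] := Phi_w_mem a r => /allP; apply. Qed.

Lemma Phi_w_subset a r w : {subset a :: r <= w} -> Phi_w H (a :: r) <= Phi_w H w.
Proof. by move=> sub; rewrite Phi_w_le; apply/allP => z /sub; apply: le_Phi_w. Qed.

Lemma Phi_w_rcons_le w b c :
  Phi_w H w <= c -> H b <= c -> Phi_w H (rcons w b) <= c.
Proof.
case: w => [|a r]; first by rewrite /= big_nil.
by rewrite rcons_cons !Phi_w_le -rcons_cons all_rcons => -> ->.
Qed.

End PathHeights.

Section CommunicationHeight.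
Variables (R : realDomainType) (X : finType) (H : X -> R) (q : X -> X -> R).

Lemma H_le_Htop z : H z <= Htop H.
Proof. exact: le_bigmax. Qed.

Lemma Phi_le_Htop x y : Phi H q x y <= Htop H.
Proof. exact: bigmin_le_id. Qed.

Lemma Phi_le_Phi_w x y w : path_from_to q x y w -> Phi H q x y <= Phi_w H w.
Proof.
case: w => [[]//|a r] p; have [z _ e] := Phi_w_mem H a r.
by rewrite e; apply: bigmin_le_cond; apply/asboolP; exists (a :: r).
Qed.

Lemma Phi_le_on_path x y w z :
  path_from_to q x y w -> z \in w -> Phi H q x z <= Phi_w H w.
Proof.
case: w => [[]//|a r] p zw; have [[|b s] pz sub] := path_from_to_prefix p zw.
  by case: pz.
exact: le_trans (Phi_le_Phi_w pz) (Phi_w_subset H sub).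
Qed.

Lemma PhiS1E x (A : {set X}) :
  PhiS H q [set x] A = \big[Num.min/Htop H]_(y in A) Phi H q x y.
Proof. by rewrite /PhiS big_set1E; apply/min_idPl; apply: bigmin_le_id. Qed.

Lemma PhiS_le_Phi x (A : {set X}) y : y \in A -> PhiS H q [set x] A <= Phi H q x y.
Proof. by move=> yA; rewrite PhiS1E; apply: bigmin_le_cond. Qed.

Lemma PhiS_attained x (A : {set X}) :
  A != set0 -> exists2 y, y \in A & PhiS H q [set x] A = Phi H q x y.
Proof.
case/set0Pn => y0 y0A; rewrite PhiS1E.
have [y yA ->] := eq_bigmin y0 _ (Phi H q x) y0A (fun y _ => Phi_le_Htop x y).
by exists y.
Qed.

Hypothesis q_irr : irreducible_mx q.

Lemma Phi_attained x y :
  exists2 w, path_from_to q x y w & Phi_w H w = Phi H q x y.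
Proof.
have [[|a r] p] := q_irr x y; first by case: p.
have [z0 _ e0] := Phi_w_mem H a r.
pose P z := `[< exists w, path_from_to q x y w /\ Phi_w H w = H z >].
have P0 : P z0 by apply/asboolP; exists (a :: r).
have [z /asboolP[w [pw ew]] e] := eq_bigmin z0 P H P0 (fun z _ => H_le_Htop z).
by exists w; rewrite // /Phi e.
Qed.

Lemma H_le_Phi_l x y : H x <= Phi H q x y.
Proof.
have [[|a r] p <-] := Phi_attained x y; first by case: p.
by case/path_from_to_cons: p => -> _ _; rewrite le_Phi_w ?mem_head.
Qed.

Lemma H_le_Phi_r x y : H y <= Phi H q x y.
Proof.
have [[|a r] p <-] := Phi_attained x y; first by case: p.
by case/path_from_to_cons: p => -> _ <-; rewrite le_Phi_w ?mem_last.
Qed.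

End CommunicationHeight.

Section RelevantCycle.
Variables (R : realDomainType) (X : finType) (H : X -> R) (q : X -> X -> R).
Variables (A : {set X}) (x : X).
Hypotheses (q_sym : symmetric_mx q) (q_irr : irreducible_mx q).

Local Notation PhiA := (PhiS H q [set x] A).

Definition low_set : {set X} := [set z | Phi H q x z <= PhiA].

Lemma path_low_set y w :
  path_from_to q x y w -> Phi_w H w <= PhiA -> all (fun z => z \in low_set) w.
Proof.
move=> p le_wA; apply/allP => z zw; rewrite inE.
exact: le_trans (Phi_le_on_path H p zw) le_wA.
Qed.

Lemma reach_low_set z :
  z \in low_set -> exists2 w, path_from_to q x z w & all (fun u => u \in low_set) w.
Proof.
rewrite inE => zD; have [w p e] := Phi_attained H q_irr x z.
by exists w => //; apply: (path_low_set p); rewrite e.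
Qed.

Lemma Omega_opt_low_set w :
  Omega_opt H q x A w <-> Omega q x A w /\ all (fun z => z \in low_set) w.
Proof.
have path_Omega : Omega q x A w -> path_from_to q x (last x w) w by case.
split=> [[Om e] | [Om Dw]]; split=> //.
  by apply: (path_low_set (path_Omega Om)); rewrite e.
apply/le_anti/andP; split.
  case: Om => + _ _ _; case: w {path_Omega} Dw => // a r Dw _.
  rewrite Phi_w_le; apply/allP => z /(allP Dw); rewrite inE.
  exact: le_trans (H_le_Phi_r H q_irr x z).
case: (Om) => _ _ lA _.
exact: le_trans (PhiS_le_Phi H q x lA) (Phi_le_Phi_w H (path_Omega Om)).
Qed.

Hypotheses (A_neq0 : A != set0) (xNA : x \notin A).

Lemma start_in_low_set : x \in low_set.
Proof.
rewrite inE; have [y yA ->] := PhiS_attained H q x A_neq0.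
apply: le_trans (H_le_Phi_l H q_irr x y).
have px : path_from_to q x x [:: x] by [].
by apply: le_trans (Phi_le_Phi_w H px) _; rewrite /= big_nil.
Qed.

Lemma low_set_connected : connected_set q low_set.
Proof.
have [y0 y0A Ey0] := PhiS_attained H q x A_neq0.
split.
  have y0x : y0 != x by apply: contraNneq xNA => <-.
  have sub : [set x; y0] \subset low_set.
    by apply/subsetP => u /set2P[] ->; rewrite ?start_in_low_set // inE Ey0.
  by move/subset_leq_card: sub; rewrite cards2 eq_sym y0x.
move=> a b /reach_low_set[wa pa Da] /reach_low_set[wb pb Db].
exists (rev wa ++ behead wb).
split; first exact: path_from_to_cat (path_from_to_rev q_sym pa) pb.
apply/allP => z; rewrite mem_cat mem_rev.
by case/orP => [/(allP Da) | /mem_behead/(allP Db)].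
Qed.

Lemma low_set_bd_higher a b : a \in low_set -> b \in bd q low_set -> H a < H b.
Proof.
rewrite inE => aD /setIdP[bND /existsP[z /andP[zD zb]]].
rewrite inE in zD.
apply: le_lt_trans (le_trans (H_le_Phi_r H q_irr x a) aD) _.
rewrite ltNge; apply: contra bND => bA; rewrite inE.
have [w pz ez] := Phi_attained H q_irr x z.
apply: le_trans (Phi_le_Phi_w H (path_from_to_rcons pz zb)) _.
by apply: Phi_w_rcons_le bA; rewrite ez.
Qed.

Lemma low_set_cycle : is_cycle H q low_set.
Proof.
split; first by apply/set0Pn; exists x; apply: start_in_low_set.
by right; split; [apply: low_set_connected | apply: low_set_bd_higher].
Qed.

Lemma init_cycle_proper_low_set : init_cycle H q A x \proper low_set.
Proof.
have [y0 y0A Ey0] := PhiS_attained H q x A_neq0.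
apply/properP; split.
  apply/subsetP => z; rewrite !inE => /predU1P[-> | /ltW //].
  by move: start_in_low_set; rewrite inE.
exists y0; first by rewrite inE Ey0.
rewrite inE negb_or -leNgt PhiS_le_Phi // andbT.
by apply: contraNneq xNA => <-.
Qed.

Lemma low_set_subset_cycle C :
  is_cycle H q C -> init_cycle H q A x \proper C -> low_set \subset C.
Proof.
move=> [_ C_cases] /properP[sub_init [u uC]].
rewrite inE negb_or => /andP[ux uNinit].
have xC : x \in C by apply: (subsetP sub_init); rewrite inE eqxx.
have [C1 | [[_ C_conn] C_bd]] := C_cases.
  have : [set x; u] \subset C by apply/subsetP => v /set2P[] ->.
  by move/subset_leq_card; rewrite cards2 eq_sym ux C1.
apply/subsetP => z zD; apply/negPn/negP => zNC.
have [[|a r] pz ez] := Phi_attained H q_irr x z; first by case: pz.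
case/path_from_to_cons: (pz) => ax pr lr; subst a.
have lNC : last x r \notin C by rewrite lr zNC.
have [b bbd br] := path_exit pr xC lNC.
have HbA : H b <= PhiA.
  rewrite inE -ez in zD; apply: le_trans zD.
  by apply: le_Phi_w; rewrite inE br orbT.
have [[|c s] [pu Cu]] := C_conn x u xC uC; first by case: pu.
suff : Phi H q x u < PhiA by rewrite (negPf uNinit).
apply: le_lt_trans (Phi_le_Phi_w H pu) _; apply: Phi_w_lt.
by apply/allP => v /(allP Cu) vC; apply: lt_le_trans (C_bd v b vC bbd) HbA.
Qed.

Lemma relevant_cycle_low_set Cp : is_relevant_cycle H q A x Cp -> Cp = low_set.
Proof.
case=> Cp_cycle init_Cp Cp_min; apply/eqP; rewrite eqEsubset.
rewrite low_set_subset_cycle // andbT.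
exact: Cp_min low_set_cycle init_cycle_proper_low_set.
Qed.

End RelevantCycle.

Theorem lemma3p8 (R : realDomainType) (X : finType) (H : X -> R) (q : X -> X -> R)
  (Hnc : exists a b, H a != H b)
  (Hsto : stochastic q) (Hsym : symmetric_mx q) (Hirr : irreducible_mx q)
  (A : {set X}) (x : X) (HA : A != set0) (HxA : x \notin A)
  (Hconv : A_convention q x A)
  (Cp : {set X}) (HCp : is_relevant_cycle H q A x Cp)
  (w : seq X) :
  Omega_opt H q x A w <-> (Omega q x A w /\ all (fun z => z \in Cp) w).
Proof.
rewrite (relevant_cycle_low_set Hsym Hirr HA HxA HCp).
exact: Omega_opt_low_set.
Qed.
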